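(* Let $G$ be a graph with $n$ vertices and maximum degree $\Delta$, and let $1\leq k\leq n$. (i) If $0\leq \alpha \leq \frac{1}{2}$, then $S_k(A_{\alpha}(G))\geq (1-\alpha) S_k(Q(G))+(2\alpha-1)k\Delta$. (ii) If $\frac{1}{2}\leq \alpha \leq 1$, then $S_k(A_{\alpha}(G))\geq \alpha S_k(Q(G))+(1-2\alpha)S_k(A(G))$. If $G$ is a regular graph, then equality holds in both inequalities.
   Context: All graphs are simple and undirected. $A(G)$ is the adjacency matrix, $D(G)$ the diagonal degree matrix, $Q(G)=D(G)+A(G)$ the signless Laplacian matrix, and $A_{\alpha}(G)=\alpha D(G)+(1-\alpha)A(G)$. For a real symmetric matrix $M$ with eigenvalues $\lambda_1(M)\geq\cdots\geq\lambda_n(M)$, $S_k(M)=\sum_{i=1}^k\lambda_i(M)$. *)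

(* Real numbers are modelled by an arbitrary real closed
   field R (the reals are an instance). *)
From HB Require Import structures.
From mathcomp Require Import all_boot all_order all_algebra.
Set Implicit Arguments. Unset Strict Implicit. Unset Printing Implicit Defensive.
Import Order.TTheory GRing.Theory Num.Theory.
Local Open Scope ring_scope.

Definition simple_graph (n : nat) (e : rel 'I_n) : Prop :=
  (forall i, ~~ e i i) /\ (forall i j, e i j = e j i).

Definition deg (n : nat) (e : rel 'I_n) (i : 'I_n) : nat := #|[set j | e i j]|.

Definition maxdeg (n : nat) (e : rel 'I_n) : nat := (\max_(i < n) deg e i)%N.

Definition regular (n : nat) (e : rel 'I_n) : Prop :=
  exists r : nat, forall i, deg e i = r.

Definition adjm (R : nzRingType) (n : nat) (e : rel 'I_n) : 'M[R]_n :=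
  \matrix_(i, j) (e i j)%:R.

Definition degm (R : nzRingType) (n : nat) (e : rel 'I_n) : 'M[R]_n :=
  \matrix_(i, j) ((i == j)%:R * (deg e i)%:R).

Definition signlessm (R : nzRingType) (n : nat) (e : rel 'I_n) : 'M[R]_n :=
  degm R e + adjm R e.

Definition Aalpha (R : nzRingType) (n : nat) (e : rel 'I_n) (a : R) : 'M[R]_n :=
  a *: degm R e + (1 - a) *: adjm R e.

(* s is the list of eigenvalues of M (with multiplicity), in non-increasing
   order lambda_1 >= ... >= lambda_n: s lists the roots of the characteristic
   polynomial of M with multiplicities, sorted decreasingly. *)
Definition is_spectrum (R : rcfType) (n : nat) (M : 'M[R]_n) (s : seq R) : Prop :=
  sorted (>=%R) s /\ char_poly M = \prod_(x <- s) ('X - x%:P).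

Definition Sk (R : nzRingType) (k : nat) (s : seq R) : R := \sum_(i < k) s`_i.

(* Ky Fan's maximum principle: if M is normal with eigenvalues sorted
   decreasingly, S_k(M) is the maximum of tr (U M U^* ) over k x n matrices U
   with orthonormal rows, because in an eigenbasis this trace is a combination
   of the eigenvalues with weights in [0, 1] summing to k. The trace is linear
   in M, so evaluating A_alpha = (1 - alpha) Q + (2 alpha - 1) D, resp.
   A_alpha = alpha Q + (1 - 2 alpha) A, at a maximizer U for Q gives (i) and
   (ii) from tr (U D U^* ) <= k Delta, resp. tr (U A U^* ) <= S_k(A). For an
   r-regular graph D = r I, hence S_k(Q) = S_k(A) + r k and
   S_k(A_alpha) = (1 - alpha) S_k(A) + alpha r k, which gives equality.
   Real symmetric matrices are handled through their complexification, where
   the spectral theorem is available. *)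

From HB Require Import structures.
From mathcomp Require Import all_boot all_order all_algebra perm.
From mathcomp Require Import sesquilinear spectral ring zify complex.
Set Implicit Arguments. Unset Strict Implicit. Unset Printing Implicit Defensive.
Import Order.TTheory GRing.Theory Num.Theory.
Local Open Scope ring_scope.
Local Open Scope sesquilinear_scope.

Lemma sorted_weighted_sum_le (R : numDomainType) n k (s : seq R) (w : 'I_n -> R) :
  sorted >=%R s -> size s = n -> (k <= n)%N ->
  (forall i, 0 <= w i <= 1) -> \sum_i w i = k%:R ->
  \sum_(i < n) s`_i * w i <= \sum_(i < k) s`_i.
Proof.
move=> s_sorted s_size le_kn w01 w_sum.
have ge_trans : transitive (>=%R : rel R) by move=> y x z xy yz; exact: le_trans yz xy.
have le_nth (i j : nat) : (i <= j < n)%N -> s`_j <= s`_i.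
  move=> /andP[le_ij lt_jn].
  apply: (sorted_leq_nth ge_trans (@lexx _ R) 0 s_sorted) => //; rewrite inE s_size; lia.
pose c := s`_k.-1.
pose T (i : 'I_n) := if (i < k)%N then (s`_i - c) * (1 - w i) else (c - s`_i) * w i.
have sum_ind : \sum_(i < n) ((i < k)%N%:R : R) = k%:R.
  have : \sum_(i < k) (1 : R) = k%:R by rewrite sumr_const card_ord.
  rewrite (big_ord_widen n (fun=> 1)) // => <-.
  by rewrite [RHS]big_mkcond; apply: eq_bigr => i _; case: ifP.
(* With c the k-th largest entry, the gap is \sum_i T i + c * (k - \sum_i w i),
   where the last term vanishes and every T i is nonnegative. *)
have gapE : \sum_(i < k) s`_i - \sum_(i < n) s`_i * w i
    = \sum_i T i + c * (k%:R - \sum_i w i).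
  rewrite (big_ord_widen n (fun i => s`_i)) // big_mkcond -sum_ind mulrBr !mulr_sumr.
  rewrite -!sumrB -big_split; apply: eq_bigr => i _ /=.
  by rewrite /T; case: ifP => _ /=; ring.
rewrite -subr_ge0 gapE w_sum subrr mulr0 addr0; apply: sumr_ge0 => i _.
have /andP[w0 w1] := w01 i; rewrite /T; case: ifP => lt_ik.
  by rewrite mulr_ge0 // subr_ge0 // le_nth //; lia.
by rewrite mulr_ge0 // subr_ge0 le_nth //; move: (ltn_ord i) lt_ik; lia.
Qed.

Lemma char_poly_conj (R : comNzRingType) n (P Q A : 'M[R]_n) :
  Q *m P = 1%:M -> char_poly (Q *m A *m P) = char_poly A.
Proof.
move=> QP1; rewrite /char_poly /char_poly_mx.
set Q' := map_mx polyC Q; set P' := map_mx polyC P.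
have Q'P'1 : Q' *m P' = 1%:M by rewrite -map_mxM QP1 map_mx1.
have XE : 'X%:M = Q' *m 'X%:M *m P' :> 'M_n.
  by rewrite mul_mx_scalar -scalemxAl Q'P'1 scalemx1.
rewrite {1}XE !map_mxM -mulmxBl -mulmxBr !det_mulmx mulrAC -det_mulmx Q'P'1.
by rewrite det1 mul1r.
Qed.

Section KyFan.
Variable C : numClosedFieldType.

Definition normal_spectrum n (A : 'M[C]_n) (s : seq C) :=
  [/\ A \is normalmx, sorted >=%R s & char_poly A = \prod_(x <- s) ('X - x%:P)].

Lemma unitary_trC_mulmx n (P : 'M[C]_n) : P \is unitarymx -> P^t* *m P = 1%:M.
Proof. by rewrite -trmxC_unitary => /unitarymxP; rewrite trmxCK. Qed.

Lemma perm_unitarymx n (p : 'S_n) : perm_mx p \is @unitarymx C n n.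
Proof. by apply/unitarymxP; rewrite tr_perm_mx map_perm_mx -perm_mxM mulgV perm_mx1. Qed.

Lemma normal_sorted_spectral n (A : 'M[C]_n) (s : seq C) :
  A \is normalmx -> char_poly A = \prod_(x <- s) ('X - x%:P) ->
  size s = n /\
  exists2 V : 'M_n, V \is unitarymx & A = V^t* *m diag_mx (\row_i s`_i) *m V.
Proof.
move=> /orthomx_spectralP A_spectral cpA.
set P := spectralmx A in A_spectral; set d := spectral_diag A in A_spectral.
have P_unitary : P \is unitarymx by exact: spectral_unitarymx.
rewrite invmx_unitary // in A_spectral.
pose t : n.-tuple C := [tuple d 0 i | i < n].
have s_perm_t : perm_eq s t.
  apply: prod_XsubC_eq; rewrite -cpA A_spectral char_poly_conj ?unitary_trC_mulmx //.
  rewrite char_poly_trig ?diag_mx_is_trig // big_tuple.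
  by apply: eq_bigr => i _; rewrite !mxE eqxx mulr1n tnth_mktuple.
split; first by rewrite (perm_size s_perm_t) size_tuple.
have [p sE] := tuple_permP s_perm_t.
exists (perm_mx p *m P); first by rewrite mul_unitarymx ?perm_unitarymx.
rewrite trmx_mul map_mxM tr_perm_mx map_perm_mx A_spectral !mulmxA; congr (_ *m _).
rewrite -!mulmxA; congr (_ *m _).
rewrite -{2}[p]invgK -col_permE -row_permE.
apply/matrixP => i j; rewrite !mxE sE -tnth_nth !tnth_mktuple permKV.
by rewrite (inj_eq perm_inj).
Qed.

Lemma gram_diag_ge0 k n (W : 'M[C]_(k, n)) i : 0 <= (W^t* *m W) i i.
Proof. by rewrite mxE; apply: sumr_ge0 => r _; rewrite !mxE mulrC mul_conjC_ge0. Qed.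

Lemma unitarymx_gram_diag_le1 k n (W : 'M[C]_(k, n)) i :
  W \is unitarymx -> (W^t* *m W) i i <= 1.
Proof.
move=> /unitarymxP W_unitary; set P := W^t* *m W.
have P_idem : P *m P = P by rewrite mulmxA -(mulmxA _ W) W_unitary mulmx1.
have P_herm j : P j i = (P i j)^*.
  have P_adj : P^t* = P by rewrite /P trmx_mul map_mxM trmxCK.
  by rewrite -{1}P_adj !mxE.
have P_ii_ge0 : 0 <= P i i by exact: gram_diag_ge0.
have P_ii_real : (P i i)^* = P i i by apply/CrealP/ger0_real.
have sq_le : P i i * P i i <= P i i.
  rewrite -{3}P_idem [leRHS]mxE (bigD1 i) //= P_herm P_ii_real lerDl.
  by apply: sumr_ge0 => j _; rewrite P_herm mul_conjC_ge0.
have [->|P_ii_neq0] := eqVneq (P i i) 0; first exact: ler01.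
have P_ii_gt0 : 0 < P i i by rewrite lt_def P_ii_neq0.
by rewrite -(ler_pM2l P_ii_gt0) mulr1.
Qed.

Lemma unitarymx_gram_trace k n (W : 'M[C]_(k, n)) :
  W \is unitarymx -> \tr (W^t* *m W) = k%:R.
Proof. by move=> /unitarymxP W_unitary; rewrite mxtrace_mulC W_unitary mxtrace1. Qed.

Definition trace_compress k n (U : 'M[C]_(k, n)) (A : 'M[C]_n) : C :=
  \tr (U *m A *m U^t*).

Lemma trace_compressD k n (U : 'M[C]_(k, n)) (A B : 'M_n) :
  trace_compress U (A + B) = trace_compress U A + trace_compress U B.
Proof. by rewrite /trace_compress mulmxDr mulmxDl mxtraceD. Qed.

Lemma trace_compressZ k n (U : 'M[C]_(k, n)) c (A : 'M_n) :
  trace_compress U (c *: A) = c * trace_compress U A.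
Proof. by rewrite /trace_compress -scalemxAr -scalemxAl mxtraceZ. Qed.

Lemma trace_compress_scalar k n (U : 'M[C]_(k, n)) c :
  U \is unitarymx -> trace_compress U c%:M = c * k%:R.
Proof.
move=> /unitarymxP U_unitary.
by rewrite /trace_compress mul_mx_scalar -scalemxAl mxtraceZ U_unitary mxtrace1.
Qed.

Lemma trace_compress_diag k n (U : 'M[C]_(k, n)) (x : 'rV_n) :
  trace_compress U (diag_mx x) = \sum_i x 0 i * (U^t* *m U) i i.
Proof.
rewrite /trace_compress mxtrace_mulC mulmxA; apply: eq_bigr => i _.
by rewrite mul_mx_diag mxE mulrC.
Qed.

Lemma trace_compress_unitary_conj k n (U : 'M[C]_(k, n)) (V D : 'M_n) :
  trace_compress U (V^t* *m D *m V) = trace_compress (U *m V^t*) D.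
Proof. by rewrite /trace_compress trmx_mul map_mxM trmxCK !mulmxA. Qed.

Lemma ky_fan_le n k (A : 'M[C]_n) (s : seq C) (U : 'M[C]_(k, n)) :
  normal_spectrum A s -> (k <= n)%N -> U \is unitarymx ->
  trace_compress U A <= Sk k s.
Proof.
case=> A_normal s_sorted cpA le_kn U_unitary.
have [s_size [V V_unitary ->]] := normal_sorted_spectral A_normal cpA.
have W_unitary : U *m V^t* \is unitarymx by rewrite mul_unitarymx ?trmxC_unitary.
rewrite trace_compress_unitary_conj trace_compress_diag.
under eq_bigr do rewrite mxE.
apply: sorted_weighted_sum_le => // [i|].
  by rewrite gram_diag_ge0 unitarymx_gram_diag_le1.
exact: unitarymx_gram_trace.
Qed.

Lemma ky_fan_attained n k (A : 'M[C]_n) (s : seq C) :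
  normal_spectrum A s -> (k <= n)%N ->
  exists2 U : 'M[C]_(k, n), U \is unitarymx & trace_compress U A = Sk k s.
Proof.
case=> A_normal _ cpA le_kn.
have [_ [V V_unitary ->]] := normal_sorted_spectral A_normal cpA.
have pid_adj a b : (pid_mx k : 'M[C]_(a, b))^t* = pid_mx k.
  by rewrite tr_pid_mx map_pid_mx.
exists (pid_mx k *m V).
  apply/unitarymxP; rewrite trmx_mul map_mxM mulmxA mulmxtVK // pid_adj mul_pid_mx.
  by rewrite !minnn (minn_idPr le_kn) pid_mx_1.
rewrite trace_compress_unitary_conj mulmxtVK // trace_compress_diag.
rewrite /Sk (big_ord_widen n (fun i => s`_i)) // [RHS]big_mkcond; apply: eq_bigr => i _.
rewrite pid_adj mul_pid_mx !minnn !mxE eqxx /=.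
by case: ifP => _; rewrite ?mulr1 ?mulr0.
Qed.

Lemma Sk_lincomb_ge n k (M P N : 'M[C]_n) (sM sP : seq C) (a b c : C) :
  normal_spectrum M sM -> normal_spectrum P sP -> (k <= n)%N ->
  M = a *: P + b *: N -> b <= 0 ->
  (forall U : 'M_(k, n), U \is unitarymx -> trace_compress U N <= c) ->
  a * Sk k sP + b * c <= Sk k sM.
Proof.
move=> spM spP le_kn M_def b_le0 N_le.
have [U U_unitary <-] := ky_fan_attained spP le_kn.
apply: le_trans (ky_fan_le spM le_kn U_unitary).
by rewrite M_def trace_compressD !trace_compressZ lerD2l ler_wnM2l // N_le.
Qed.

Lemma Sk_scale_shift n k (M N : 'M[C]_n) (sM sN : seq C) (b c : C) :
  normal_spectrum M sM -> normal_spectrum N sN -> (k <= n)%N ->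
  M = b *: N + c%:M -> 0 <= b -> Sk k sM = b * Sk k sN + c * k%:R.
Proof.
move=> spM spN le_kn M_def b_ge0.
have compressM (U : 'M_(k, n)) : U \is unitarymx ->
    trace_compress U M = b * trace_compress U N + c * k%:R.
  by move=> U_unitary; rewrite M_def trace_compressD trace_compressZ trace_compress_scalar.
apply/le_anti/andP; split.
- have [U U_unitary <-] := ky_fan_attained spM le_kn.
  by rewrite compressM // lerD2r ler_wpM2l // ky_fan_le.
- have [U U_unitary <-] := ky_fan_attained spN le_kn.
  by rewrite -compressM // ky_fan_le.
Qed.

End KyFan.

Lemma degm_diag (R : nzRingType) n (e : rel 'I_n) :
  degm R e = diag_mx (\row_i (deg e i)%:R).
Proof. by apply/matrixP => i j; rewrite !mxE mulr_natl. Qed.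

Lemma degm_regular (R : nzRingType) n (e : rel 'I_n) r :
  (forall i, deg e i = r) -> degm R e = r%:R%:M.
Proof. by move=> deg_r; apply/matrixP => i j; rewrite !mxE deg_r mulr_natl. Qed.

Lemma maxdeg_regular n (e : rel 'I_n) r :
  (0 < n)%N -> (forall i, deg e i = r) -> maxdeg e = r.
Proof.
move=> n_gt0 deg_r; apply/eqP; rewrite eqn_leq; apply/andP; split.
  by apply/bigmax_leqP => i _; rewrite deg_r.
by rewrite -(deg_r (Ordinal n_gt0)); exact: (@leq_bigmax _ (deg e)).
Qed.

Lemma tr_adjm (R : nzRingType) n (e : rel 'I_n) :
  simple_graph e -> (adjm R e)^T = adjm R e.
Proof. by case=> _ e_sym; apply/matrixP => i j; rewrite !mxE e_sym. Qed.

Lemma tr_degm (R : nzRingType) n (e : rel 'I_n) : (degm R e)^T = degm R e.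
Proof. by rewrite degm_diag tr_diag_mx. Qed.

Lemma tr_signlessm (R : nzRingType) n (e : rel 'I_n) :
  simple_graph e -> (signlessm R e)^T = signlessm R e.
Proof. by move=> simple_e; rewrite linearD /= tr_degm tr_adjm. Qed.

Lemma tr_Aalpha (R : nzRingType) n (e : rel 'I_n) (a : R) :
  simple_graph e -> (Aalpha e a)^T = Aalpha e a.
Proof. by move=> simple_e; rewrite linearD /= !linearZ /= tr_degm tr_adjm. Qed.

Section MapGraphMatrices.
Variables (R S : nzRingType) (f : {rmorphism R -> S}) (n : nat) (e : rel 'I_n).

Lemma map_adjm : map_mx f (adjm R e) = adjm S e.
Proof. by apply/matrixP => i j; rewrite !mxE rmorph_nat. Qed.

Lemma map_degm : map_mx f (degm R e) = degm S e.
Proof. by apply/matrixP => i j; rewrite !mxE rmorphM !rmorph_nat. Qed.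

Lemma map_signlessm : map_mx f (signlessm R e) = signlessm S e.
Proof. by rewrite map_mxD map_adjm map_degm. Qed.

Lemma map_Aalpha a : map_mx f (Aalpha e a) = Aalpha e (f a).
Proof. by rewrite map_mxD !map_mxZ map_adjm map_degm rmorphB rmorph1. Qed.

End MapGraphMatrices.

Lemma trace_compress_degm_le (C : numClosedFieldType) k n (e : rel 'I_n)
    (U : 'M[C]_(k, n)) :
  U \is unitarymx -> trace_compress U (degm C e) <= k%:R * (maxdeg e)%:R.
Proof.
move=> U_unitary; rewrite degm_diag trace_compress_diag.
rewrite -(unitarymx_gram_trace U_unitary) mulr_suml; apply: ler_sum => i _.
rewrite mxE mulrC ler_wpM2l ?gram_diag_ge0 // ler_nat.
exact: (@leq_bigmax _ (deg e)).
Qed.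

Section GraphSpectra.
Variables (C : numClosedFieldType) (n : nat) (e : rel 'I_n) (k : nat) (a : C).
Variables (sA sQ sAa : seq C).
Hypothesis le_kn : (k <= n)%N.
Hypothesis spA : normal_spectrum (adjm C e) sA.
Hypothesis spQ : normal_spectrum (signlessm C e) sQ.
Hypothesis spAa : normal_spectrum (Aalpha e a) sAa.

Lemma Sk_Aalpha_ge_low : a <= 2^-1 ->
  (1 - a) * Sk k sQ + (2 * a - 1) * k%:R * (maxdeg e)%:R <= Sk k sAa.
Proof.
move=> a_le_half; rewrite -mulrA.
apply: (Sk_lincomb_ge spAa spQ le_kn _ _ (@trace_compress_degm_le C k n e)).
  rewrite /Aalpha /signlessm scalerDr addrAC -scalerDl.
  by congr (_ *: _ + _); ring.
by rewrite subr_le0 -(ler_pdivlMl _ _ (ltr0Sn _ 1)) mulr1.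
Qed.

Lemma Sk_Aalpha_ge_high : 2^-1 <= a ->
  a * Sk k sQ + (1 - 2 * a) * Sk k sA <= Sk k sAa.
Proof.
move=> half_le_a.
apply: (Sk_lincomb_ge spAa spQ le_kn _ _ (fun U => ky_fan_le spA le_kn)).
  rewrite /Aalpha /signlessm scalerDr -addrA -scalerDl.
  by congr (_ + _ *: _); ring.
by rewrite subr_le0 -(ler_pdivrMl _ _ (ltr0Sn _ 1)) mulr1.
Qed.

Lemma Sk_signless_regular r :
  (forall i, deg e i = r) -> Sk k sQ = Sk k sA + r%:R * k%:R.
Proof.
move=> deg_r; rewrite (Sk_scale_shift spQ spA le_kn (b := 1) (c := r%:R)) ?mul1r //.
by rewrite /signlessm (degm_regular _ deg_r) scale1r addrC.
Qed.

Lemma Sk_Aalpha_regular r : a <= 1 ->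
  (forall i, deg e i = r) -> Sk k sAa = (1 - a) * Sk k sA + a * r%:R * k%:R.
Proof.
move=> a_le1 deg_r.
rewrite (Sk_scale_shift spAa spA le_kn (b := 1 - a) (c := a * r%:R)) ?subr_ge0 //.
by rewrite /Aalpha (degm_regular _ deg_r) scale_scalar_mx addrC.
Qed.

Lemma Sk_Aalpha_bounds : (0 < k)%N -> 0 <= a <= 1 ->
  (a <= 2^-1 ->
     Sk k sAa >= (1 - a) * Sk k sQ + (2 * a - 1) * k%:R * (maxdeg e)%:R)
  /\ (2^-1 <= a ->
     Sk k sAa >= a * Sk k sQ + (1 - 2 * a) * Sk k sA)
  /\ (regular e ->
        (a <= 2^-1 ->
           Sk k sAa = (1 - a) * Sk k sQ + (2 * a - 1) * k%:R * (maxdeg e)%:R)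
     /\ (2^-1 <= a ->
           Sk k sAa = a * Sk k sQ + (1 - 2 * a) * Sk k sA)).
Proof.
move=> k_gt0 /andP[_ a_le1].
split; first exact: Sk_Aalpha_ge_low.
split; first exact: Sk_Aalpha_ge_high.
case=> r deg_r; have maxdeg_r := maxdeg_regular (leq_trans k_gt0 le_kn) deg_r.
split=> _; rewrite (Sk_Aalpha_regular a_le1 deg_r) (Sk_signless_regular deg_r).
  by rewrite maxdeg_r; ring.
by ring.
Qed.

End GraphSpectra.

Lemma Sk_map (R S : nzRingType) (f : {rmorphism R -> S}) k (s : seq R) :
  f (Sk k s) = Sk k (map f s).
Proof.
rewrite rmorph_sum; apply: eq_bigr => i _.
by elim: s (i : nat) => [|x s IHs] [|j] //=; rewrite rmorph0.
Qed.

Lemma symmetric_normal_spectrum (R : rcfType) n (M : 'M[R]_n) (s : seq R) :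
  M^T = M -> is_spectrum M s ->
  normal_spectrum (map_mx (real_complex R) M) (map (real_complex R) s).
Proof.
move=> M_sym [s_sorted cpM]; split.
- suff M_adj : (map_mx (real_complex R) M)^t* = map_mx (real_complex R) M.
    by apply/normalmxP; rewrite M_adj.
  apply/matrixP => i j; rewrite !mxE conj_Creal; last by apply/complex_realP; exists (M j i).
  by rewrite -[in RHS]M_sym mxE.
- by move: s_sorted; apply: homo_sorted => x y /=; rewrite lecR.
- rewrite -map_char_poly cpM rmorph_prod big_map; apply: eq_bigr => x _.
  by rewrite rmorphB /= map_polyX map_polyC.
Qed.

Theorem theorem5p1 (R : rcfType) (n : nat) (e : rel 'I_n) (k : nat) (a : R)
    (sA sQ sAa : seq R) :
  simple_graph e ->
  (1 <= k <= n)%N ->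
  0 <= a <= 1 ->
  is_spectrum (adjm R e) sA ->
  is_spectrum (signlessm R e) sQ ->
  is_spectrum (Aalpha e a) sAa ->
  (a <= 2^-1 ->
     Sk k sAa >= (1 - a) * Sk k sQ + (2 * a - 1) * k%:R * (maxdeg e)%:R)
  /\ (2^-1 <= a ->
     Sk k sAa >= a * Sk k sQ + (1 - 2 * a) * Sk k sA)
  /\ (regular e ->
        (a <= 2^-1 ->
           Sk k sAa = (1 - a) * Sk k sQ + (2 * a - 1) * k%:R * (maxdeg e)%:R)
     /\ (2^-1 <= a ->
           Sk k sAa = a * Sk k sQ + (1 - 2 * a) * Sk k sA)).
Proof.
move=> simple_e /andP[k_gt0 le_kn] /andP[a_ge0 a_le1] spA spQ spAa.
have spA' := symmetric_normal_spectrum (tr_adjm _ simple_e) spA.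
have spQ' := symmetric_normal_spectrum (tr_signlessm _ simple_e) spQ.
have spAa' := symmetric_normal_spectrum (tr_Aalpha _ simple_e) spAa.
rewrite map_adjm in spA'; rewrite map_signlessm in spQ'; rewrite map_Aalpha in spAa'.
have a01 : 0 <= real_complex R a <= 1.
  by rewrite -(rmorph1 (real_complex R)) !lecR a_ge0 a_le1.
have [low [high regular_eq]] := Sk_Aalpha_bounds le_kn spA' spQ' spAa' k_gt0 a01.
have toC_half : real_complex R 2^-1 = 2^-1 by rewrite fmorphV rmorph_nat.
have toCE := (rmorph_nat, rmorphB, rmorphN, rmorphD, rmorphM, rmorph1, Sk_map).
split; [|split].
- by move=> ?; rewrite -lecR !toCE low // -toC_half lecR.
- by move=> ?; rewrite -lecR !toCE high // -toC_half lecR.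
case/regular_eq=> low_eq high_eq; split=> ?; apply: complexI; rewrite !toCE.
  by rewrite low_eq // -toC_half lecR.
by rewrite high_eq // -toC_half lecR.
Qed.
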